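(* Let $C$ be an $A$-code of length $2$ with canonical generator matrix $\begin{pmatrix}g_1&g_2\\0&g_3\end{pmatrix}$, where $g_1,g_3$ are nonzero monic divisors of $f$ in $\mathbb{F}[x]$, $g_3$ divides $(f/g_1)g_2$, and $\deg g_2<\deg g_3$. Then the following are equivalent: (i) $C$ is self-dual, i.e. $C=C^\perp$; (ii) $\deg g_1+\deg g_3=m$, $g_3^2=g_2g_3=g_1^2+g_2^2=0$ in $A$, and $g_1^2\mid f$ in $\mathbb{F}[x]$; (iii) there exist $g',f',r\in\mathbb{F}[x]$ with $g'^2=rf'-1$ such that $f=g_1^2f'$, $g_3=g_1f'$ and $g_2=g_1g'$.
   Context: Let $\mathbb{F}$ be a finite field, $f(x)\in\mathbb{F}[x]$ monic of degree $m$, $A=\mathbb{F}[x]/\langle f(x)\rangle$, elements identified with polynomials of degree $<m$. An $A$-code of length $l$ is an $A$-submodule of $A^l$; $C^\perp=\{a\in A^l:\sum_ia_ic_i=0\ \forall c\in C\}$. The canonical generator matrix (CGM) of a nonzero $A$-code $C$ is the unique matrix over $A$ whose rows generate $C$, are monic with strictly increasing leading indices (position of first nonzero entry), have leading entries dividing $f$, satisfy that $(f/L_i)\cdot(\text{row }i)$ is an $A$-combination of later rows ($L_i$ the leading entry of row $i$), and such that every entry above a leading entry has smaller degree than it. *)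

(* A = F[x]/<f>, elements represented by polynomials of size < size f. *)
From mathcomp Require Import all_boot all_order all_algebra.
Set Implicit Arguments. Unset Strict Implicit. Unset Printing Implicit Defensive.
Import GRing.Theory.
Local Open Scope ring_scope.

Section Codes.
Variable F : finFieldType.

Definition inA (f a : {poly F}) : Prop := (size a < size f)%N.

Definition code2 (f g1 g2 g3 : {poly F}) (c : {poly F} * {poly F}) : Prop :=
  inA f c.1 /\ inA f c.2 /\
  exists u v : {poly F}, c.1 = (u * g1) %% f /\ c.2 = (u * g2 + v * g3) %% f.

Definition dual2 (f : {poly F}) (C : {poly F} * {poly F} -> Prop)
    (a : {poly F} * {poly F}) : Prop :=
  inA f a.1 /\ inA f a.2 /\
  forall c, C c -> (a.1 * c.1 + a.2 * c.2) %% f = 0.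

Definition self_dual2 (f : {poly F}) (C : {poly F} * {poly F} -> Prop) : Prop :=
  forall a, C a <-> dual2 f C a.

End Codes.

From mathcomp Require Import all_boot all_order all_algebra.
From mathcomp Require Import ring.
Set Implicit Arguments. Unset Strict Implicit. Unset Printing Implicit Defensive.
Import GRing.Theory.
Local Open Scope ring_scope.

(** Write f = g1^2 f'.  C is contained in its dual iff the rows of the generator
    matrix are pairwise orthogonal, i.e. f divides g1^2 + g2^2, g2 g3 and g3^2.
    These force g1^2 | g2^2, hence g2 = g1 g', then f' | 1 + g'^2, so f' is
    coprime to g', and finally g1 f' | g3.  Under self-duality the dual vectors
    (f/g1, 0) and (0, g1 f') are codewords, which gives g1^2 | f and g3 | g1 f';
    under (ii) the degree condition gives g3 = g1 f' instead.  Conversely, for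
    f = g1^2 f', g2 = g1 g', g3 = g1 f' a dual vector (a1, a2) has a2 = b g1 and
    a1 = a g1 with a + b g' = w f', and it is the codeword
    a (g1, g2) + (b r - w g') (0, g3). *)

Section PolyDivisibility.
Variable F : fieldType.
Implicit Types f p q : {poly F}.

Lemma dvdp_exp2rE p q k : (0 < k)%N -> (p ^+ k %| q ^+ k) = (p %| q).
Proof.
move=> k_gt0; apply/idP/idP; last exact: dvdp_exp2r.
have [-> | p_neq0] := eqVneq p 0.
  by rewrite expr0n gtn_eqF // !dvd0p expf_eq0 k_gt0.
set d := gcdp p q.
have d_neq0 : d != 0 by rewrite gcdp_eq0 negb_and p_neq0.
have Ep : p = p %/ d * d by rewrite divpK // dvdp_gcdl.
have Eq : q = q %/ d * d by rewrite divpK // dvdp_gcdr.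
have cop : coprimep (p %/ d) (q %/ d) by rewrite coprimep_div_gcd ?p_neq0.
rewrite {1}Ep {1}Eq !exprMn dvdp_mul2r ?expf_neq0 // => dvd_k.
have : p %/ d %| 1 * (q %/ d) ^+ k.
  by rewrite mul1r (dvdp_trans _ dvd_k) // dvdp_exp.
rewrite Gauss_dvdpl ?coprimep_expr // => /(dvdp_mul (dvdpp d)).
by rewrite mulrC -Ep mulr1 => /dvdp_trans; apply; rewrite dvdp_gcdr.
Qed.

Lemma modp_dot f (a1 a2 c1 c2 : {poly F}) :
  (a1 * (c1 %% f) + a2 * (c2 %% f)) %% f = (a1 * c1 + a2 * c2) %% f.
Proof. by rewrite modpD !modp_mul -modpD. Qed.

Lemma modp_mul_mod f p q : ((p %% f) * (q %% f)) %% f = (p * q) %% f.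
Proof. by rewrite modp_mul mulrC modp_mul mulrC. Qed.

Lemma modp_dot_mod f (a1 a2 c1 c2 : {poly F}) :
  ((a1 %% f) * (c1 %% f) + (a2 %% f) * (c2 %% f)) %% f = (a1 * c1 + a2 * c2) %% f.
Proof. by rewrite modpD !modp_mul_mod -modpD. Qed.

Lemma dvdp_mod_mull f p q : (f %| (p %% f) * q) = (f %| p * q).
Proof. by rewrite (dvdp_mod _ (dvdpp f)) mulrC modp_mul mulrC -dvdp_mod. Qed.

Lemma dvdp_sqrD1_coprimep p q : p %| 1 + q ^+ 2 -> coprimep p q.
Proof.
case/dvdpP=> r Er; apply/Bezout_coprimepP; exists (r, - q).
by rewrite /= -Er mulNr expr2 addrK eqpxx.
Qed.

Lemma predn_size_mul p q : p != 0 -> q != 0 ->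
  (size (p * q)).-1 = ((size p).-1 + (size q).-1)%N.
Proof.
by move=> p0 q0; rewrite size_mul // (polySpred p0) (polySpred q0) addSn addnS.
Qed.

Lemma gram_factorization (g1 g2 g3 f' : {poly F}) : g1 != 0 ->
    g1 ^+ 2 * f' %| g1 ^+ 2 + g2 ^+ 2 -> g1 ^+ 2 * f' %| g2 * g3 ->
    g1 ^+ 2 * f' %| g3 * g3 ->
  exists g', [/\ g2 = g1 * g', f' %| 1 + g' ^+ 2 & g1 * f' %| g3].
Proof.
move=> g1_neq0 d11 d23 d33.
have g1sq_neq0 : g1 ^+ 2 != 0 by rewrite expf_neq0.
have g1sq_dvd := dvdp_trans (dvdp_mulIl (g1 ^+ 2) f').
have /dvdpP [g' Eg2] : g1 %| g2.
  rewrite -(dvdp_exp2rE _ _ (isT : 0 < 2)%N).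
  by rewrite -(dvdp_addr _ (dvdpp _)) g1sq_dvd.
have /dvdpP [t Eg3] : g1 %| g3.
  by rewrite -(dvdp_exp2rE _ _ (isT : 0 < 2)%N) expr2 g1sq_dvd.
rewrite mulrC in Eg2; rewrite mulrC in Eg3; subst g2 g3.
have d1 : f' %| 1 + g' ^+ 2.
  by rewrite -(dvdp_mul2l _ _ g1sq_neq0) mulrDr mulr1 -exprMn.
exists g'; split => //.
rewrite (dvdp_mul2l _ _ g1_neq0) -(Gauss_dvdpl t (dvdp_sqrD1_coprimep d1)).
rewrite -(dvdp_mul2l _ _ g1sq_neq0).
by rewrite (_ : _ * (t * g') = g1 * g' * (g1 * t)) //; ring.
Qed.

End PolyDivisibility.

Section Duality.
Variables (F : finFieldType) (f g1 g2 g3 : {poly F}).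
Hypothesis f_neq0 : f != 0.
Local Notation C := (code2 f g1 g2 g3).

Lemma inA_modp p : inA f (p %% f).
Proof. by rewrite /inA ltn_modp. Qed.

Lemma inA0 : inA f 0.
Proof. by rewrite /inA size_poly0 size_poly_gt0. Qed.

Lemma code2_row1 : C (g1 %% f, g2 %% f).
Proof.
split; [exact: inA_modp | split; first exact: inA_modp].
by exists 1, 0; rewrite !mul1r mul0r addr0.
Qed.

Lemma code2_row2 : C (0, g3 %% f).
Proof.
split; [exact: inA0 | split; first exact: inA_modp].
by exists 0, 1; rewrite !mul0r mod0p add0r mul1r.
Qed.

Lemma dual2_code2P a : dual2 f C a <->
  [/\ inA f a.1, inA f a.2, f %| a.1 * g1 + a.2 * g2 & f %| a.2 * g3].
Proof.
case: a => a1 a2 /=; split.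
  case=> a1A [a2A orth]; split => //.
    by have := orth _ code2_row1; rewrite /= modp_dot => /modp_eq0P.
  by have := orth _ code2_row2; rewrite /= mulr0 add0r modp_mul => /modp_eq0P.
case=> a1A a2A d12 d3; split => //; split => //.
case=> _ _ [_ [_ [u [v [/= -> ->]]]]] /=; rewrite modp_dot; apply/modp_eq0P.
rewrite (_ : a1 * _ + _ = u * (a1 * g1 + a2 * g2) + v * (a2 * g3)); last by ring.
by apply: dvdp_add; apply: dvdp_mull.
Qed.

Lemma code2_sub_dual2P : (forall c, C c -> dual2 f C c) <->
  [/\ f %| g1 ^+ 2 + g2 ^+ 2, f %| g2 * g3 & f %| g3 * g3].
Proof.
split=> [sub | [d11 d23 d33]].
  have [_ [_ orth1]] := sub _ code2_row1; have [_ [_ orth2]] := sub _ code2_row2.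
  split; apply/modp_eq0P.
  - by have := orth1 _ code2_row1; rewrite /= modp_dot_mod -!expr2.
  - by have := orth1 _ code2_row2; rewrite /= mulr0 add0r modp_mul_mod.
  - by have := orth2 _ code2_row2; rewrite /= mulr0 add0r modp_mul_mod.
move=> c [c1A [c2A [u [v [E1 E2]]]]]; split=> //; split=> //.
case=> _ _ [_ [_ [u' [v' [/= -> ->]]]]] /=; rewrite E1 E2 modp_dot_mod.
apply/modp_eq0P.
rewrite (_ : u * g1 * (u' * g1) + _ =
  u * u' * (g1 ^+ 2 + g2 ^+ 2) + (u * v' + v * u') * (g2 * g3) + v * v' * (g3 * g3));
  last by ring.
by do 2?apply: dvdp_add; apply: dvdp_mull.
Qed.

End Duality.

Definition gram_criterion (F : fieldType) (f g1 g2 g3 : {poly F}) : Prop :=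
  [/\ ((size g1).-1 + (size g3).-1 = (size f).-1)%N,
      (g3 * g3) %% f = 0, (g2 * g3) %% f = 0,
      (g1 ^+ 2 + g2 ^+ 2) %% f = 0
    & g1 ^+ 2 %| f].

Definition canonical_factorization (F : fieldType) (f g1 g2 g3 : {poly F}) : Prop :=
  exists g' f' r : {poly F},
    [/\ g' ^+ 2 = r * f' - 1, f = g1 ^+ 2 * f', g3 = g1 * f' & g2 = g1 * g'].

Section SelfDual.
Variables (F : finFieldType) (f g1 g2 g3 : {poly F}).
Hypotheses (f_monic : f \is monic) (g1_monic : g1 \is monic) (g3_monic : g3 \is monic).
Hypotheses (g1_dvd_f : g1 %| f) (g3_dvd_f : g3 %| f).
Local Notation C := (code2 f g1 g2 g3).

Let f_neq0 : f != 0 := monic_neq0 f_monic.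

Lemma factorization_neq0 f' : f = g1 ^+ 2 * f' -> g1 != 0 /\ f' != 0.
Proof. by move=> Ef; move: f_neq0; rewrite Ef mulf_eq0 negb_or expf_eq0 => /andP. Qed.

Lemma canonical_factorization_of_eqp g' f' :
    f = g1 ^+ 2 * f' -> g2 = g1 * g' -> f' %| 1 + g' ^+ 2 -> g3 %= g1 * f' ->
  canonical_factorization f g1 g2 g3.
Proof.
move=> Ef Eg2 /dvdpP [r Er] eq31; exists g', f', r; split => //.
  by rewrite -Er addrC addKr.
have f'_monic : f' \is monic by move: f_monic; rewrite Ef monicMl ?monic_exp.
by apply/eqP; rewrite -eqp_monic // monicMl.
Qed.

Lemma factored_dual_sub_code : canonical_factorization f g1 g2 g3 ->
  forall a, dual2 f C a -> C a.
Proof.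
case=> g' [f' [r [Eg' Ef -> ->]]] [a1 a2].
case/(dual2_code2P _ _ _ f_neq0) => /= a1A a2A d12 d3.
have [g1_neq0 f'_neq0] := factorization_neq0 Ef.
have Ef1 : f = g1 * f' * g1 by rewrite Ef; ring.
have /dvdpP [b Ea2] : g1 %| a2.
  by rewrite -(dvdp_mul2r _ _ (mulf_neq0 g1_neq0 f'_neq0)) mulrC -Ef1.
have d12' : g1 * f' %| a1 + b * g1 * g'.
  rewrite -(dvdp_mul2r _ _ g1_neq0) -Ef1.
  by rewrite (_ : (a1 + _) * g1 = a1 * g1 + a2 * (g1 * g')) // Ea2; ring.
have /dvdpP [a Ea1] : g1 %| a1.
  have := dvdp_trans (dvdp_mulIl g1 f') d12'.
  by rewrite dvdp_addl // dvdp_mulr // dvdp_mulIr.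
have /dvdpP [w Ew] : f' %| a + b * g'.
  rewrite -(dvdp_mul2l _ _ g1_neq0).
  by rewrite (_ : g1 * (a + b * g') = a1 + b * g1 * g') // Ea1; ring.
have Ea : a = w * f' - b * g' by rewrite -Ew addrK.
split=> //; split=> //; exists a, (b * r - w * g'); split=> /=.
  by rewrite -Ea1 modp_small.
rewrite (_ : a * (g1 * g') + _ = a2 + g1 * b * (r * f' - 1 - g' ^+ 2)); last first.
  by rewrite Ea2 Ea; ring.
by rewrite -Eg' subrr mulr0 addr0 modp_small.
Qed.

Lemma factored_self_dual : canonical_factorization f g1 g2 g3 -> self_dual2 f C.
Proof.
move=> fact a; split; last exact: factored_dual_sub_code.
move: a; apply/(code2_sub_dual2P _ _ _ f_neq0).
case: fact => g' [f' [r [Eg' Ef -> ->]]].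
have [g1_neq0 _] := factorization_neq0 Ef.
rewrite Ef; split.
- rewrite exprMn Eg' (_ : g1 ^+ 2 + _ = g1 ^+ 2 * f' * r) ?dvdp_mulIl //; ring.
- by rewrite (_ : g1 * g' * _ = g1 ^+ 2 * f' * g') ?dvdp_mulIl //; ring.
- by rewrite (_ : g1 * f' * _ = g1 ^+ 2 * f' * f') ?dvdp_mulIl //; ring.
Qed.

Lemma factored_gram :
  canonical_factorization f g1 g2 g3 -> gram_criterion f g1 g2 g3.
Proof.
case=> g' [f' [r [Eg' Ef -> ->]]].
have [g1_neq0 f'_neq0] := factorization_neq0 Ef.
rewrite Ef; split; last exact: dvdp_mulIl.
- by rewrite expr2 !predn_size_mul ?mulf_neq0 // addnA.
- apply/modp_eq0P.
  by rewrite (_ : g1 * f' * _ = g1 ^+ 2 * f' * f') ?dvdp_mulIl //; ring.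
- apply/modp_eq0P.
  by rewrite (_ : g1 * g' * _ = g1 ^+ 2 * f' * g') ?dvdp_mulIl //; ring.
- apply/modp_eq0P.
  rewrite exprMn Eg' (_ : g1 ^+ 2 + _ = g1 ^+ 2 * f' * r) ?dvdp_mulIl //; ring.
Qed.

Lemma gram_factored :
  gram_criterion f g1 g2 g3 -> canonical_factorization f g1 g2 g3.
Proof.
case=> deg /modp_eq0P d33 /modp_eq0P d23 /modp_eq0P d11 g1sq_dvd_f.
have [g1_neq0 g3_neq0] := (monic_neq0 g1_monic, monic_neq0 g3_monic).
have [f' Ef] : exists f', f = g1 ^+ 2 * f' by exists (f %/ g1 ^+ 2); rewrite divpKC.
have [_ f'_neq0] := factorization_neq0 Ef.
rewrite Ef in d11 d23 d33.
have [g' [Eg2 d1 dvd13]] := gram_factorization g1_neq0 d11 d23 d33.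
apply: (canonical_factorization_of_eqp Ef Eg2 d1).
rewrite eqp_sym -dvdp_size_eqp //.
move: deg; rewrite Ef expr2 !predn_size_mul ?mulf_neq0 // => deg.
rewrite (polySpred (mulf_neq0 g1_neq0 f'_neq0)) (polySpred g3_neq0).
by rewrite predn_size_mul // eqSS; move/eqP: deg; rewrite -addnA eqn_add2l eq_sym.
Qed.

Lemma self_dual_dvdp_sqr : self_dual2 f C -> g1 ^+ 2 %| f.
Proof.
move=> sd.
have /sd [_ [_ [u [_ [/= E _]]]]] : dual2 f C ((f %/ g1) %% f, 0).
  apply/(dual2_code2P _ _ _ f_neq0); split; [exact: inA_modp | exact: inA0 | |] => /=.
    by rewrite mul0r addr0 dvdp_mod_mull divpK.
  by rewrite mul0r dvdp0.
have : g1 %| f %/ g1 by rewrite (dvdp_mod _ g1_dvd_f) E -(dvdp_mod _ g1_dvd_f) dvdp_mulIr.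
by rewrite -{2}(divpK g1_dvd_f) expr2 dvdp_mul2r // monic_neq0.
Qed.

Lemma self_dual_factored : self_dual2 f C -> canonical_factorization f g1 g2 g3.
Proof.
move=> sd; have g1_neq0 := monic_neq0 g1_monic.
have [f' Ef] : exists f', f = g1 ^+ 2 * f'.
  by exists (f %/ g1 ^+ 2); rewrite divpKC // self_dual_dvdp_sqr.
have /(code2_sub_dual2P _ _ _ f_neq0) [d11 d23 d33] : forall c, C c -> dual2 f C c.
  by move=> c /sd.
rewrite Ef in d11 d23 d33.
have [g' [Eg2 d1 dvd13]] := gram_factorization g1_neq0 d11 d23 d33.
apply: (canonical_factorization_of_eqp Ef Eg2 d1).
have Ef1 : f = g1 * f' * g1 by rewrite Ef; ring.
have /sd [_ [_ [u [v [/= E0 E3]]]]] : dual2 f C (0, (g1 * f') %% f).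
  apply/(dual2_code2P _ _ _ f_neq0); split; [exact: inA0 | exact: inA_modp | |] => /=.
    rewrite mul0r add0r dvdp_mod_mull Eg2.
    by rewrite (_ : g1 * f' * (g1 * g') = f * g') ?dvdp_mulIl // Ef1; ring.
  by rewrite dvdp_mod_mull Ef1 dvdp_mul // (dvdp_trans _ dvd13) ?dvdp_mulIl.
have dvd_u : g1 * f' %| u.
  by rewrite -(dvdp_mul2r _ _ g1_neq0) -Ef1; apply/modp_eq0P; rewrite -E0.
have dvd31 : g3 %| g1 * f'.
  rewrite (dvdp_mod _ g3_dvd_f) E3 -(dvdp_mod _ g3_dvd_f) dvdp_addl ?dvdp_mulIr //.
  by apply: dvdp_trans g3_dvd_f _; rewrite Eg2 Ef1 dvdp_mul // dvdp_mulIl.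
by rewrite /eqp dvd31 dvd13.
Qed.

End SelfDual.

Theorem mainTheorem7 (F : finFieldType) (f g1 g2 g3 : {poly F}) :
  f \is monic ->
  (* (g1 g2; 0 g3) is the canonical generator matrix of C = code2 f g1 g2 g3 *)
  g1 \is monic -> g1 %| f -> (size g1 < size f)%N ->
  g3 \is monic -> g3 %| f -> (size g3 < size f)%N ->
  g3 %| (f %/ g1) * g2 ->
  (size g2 < size g3)%N ->
  [<-> self_dual2 f (code2 f g1 g2 g3);
       [/\ ((size g1).-1 + (size g3).-1 = (size f).-1)%N,
           (g3 * g3) %% f = 0, (g2 * g3) %% f = 0,
           (g1 ^+ 2 + g2 ^+ 2) %% f = 0
         & g1 ^+ 2 %| f];
       exists g' f' r : {poly F},
         [/\ g' ^+ 2 = r * f' - 1, f = g1 ^+ 2 * f', g3 = g1 * f' & g2 = g1 * g']].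
Proof.
move=> f_monic g1_monic g1_dvd_f _ g3_monic g3_dvd_f _ _ _.
tfae.
- by move=> sd; apply/factored_gram/self_dual_factored.
- exact: gram_factored.
- exact: factored_self_dual.
Qed.
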